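(* Let $L$ be an admissible multigraph. Then every vertex of $L$ has odd degree, and this degree is greater than one.
   Context: Multigraphs may have multiple edges and loops. A trail is a sequence $v_0,e_1,v_1,\ldots,e_k,v_k$ with $e_i$ an edge joining $v_{i-1}$ and $v_i$ and no edge repeated; its length is $k$. A trail spans $L$ if every vertex of $L$ lies on it. $t(L)$ denotes the length of a longest trail in $L$. A multigraph $L$ is admissible if (A-1) $t(L)<|E(L)|$, and (A-2) for each vertex $v\in V(L)$ and each edge $e$ incident with $v$, there is a trail of length $t(L)$ beginning $v,e,\ldots$ which spans $L$. *)

From mathcomp Require Import all_boot.
Set Implicit Arguments. Unset Strict Implicit. Unset Printing Implicit Defensive.

(* A finite multigraph (multiple edges and loops allowed) is given by a
   finite vertex type V, a finite edge type E and, for each edge, its pair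
   of ends [ends e] (order irrelevant; a loop has equal ends). *)
Section Multigraph.
Variables (V E : finType) (ends : E -> V * V).

Definition joins (e : E) (u w : V) : bool :=
  (ends e == (u, w)) || (ends e == (w, u)).

Definition incident (e : E) (v : V) : bool :=
  ((ends e).1 == v) || ((ends e).2 == v).

(* degree: number of edge-ends at v (a loop contributes 2) *)
Definition deg (v : V) : nat :=
  #|[set e | (ends e).1 == v]| + #|[set e | (ends e).2 == v]|.

(* A walk v0, e1, v1, ..., ek, vk is encoded by v0 and the sequence
   [:: (e1,v1); ...; (ek,vk)]. *)
Fixpoint walk_ok (u : V) (s : seq (E * V)) : bool :=
  match s with
  | [::] => true
  | (e, w) :: s' => joins e u w && walk_ok w s'
  end.

Definition is_trail (v0 : V) (s : seq (E * V)) : bool :=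
  walk_ok v0 s && uniq (map fst s).

Definition trail_vertices (v0 : V) (s : seq (E * V)) : seq V :=
  v0 :: map snd s.

Definition spans (v0 : V) (s : seq (E * V)) : Prop :=
  forall v : V, v \in trail_vertices v0 s.

Definition longest_trail_length (t : nat) : Prop :=
  (exists v0 s, is_trail v0 s /\ size s = t) /\
  (forall v0 s, is_trail v0 s -> size s <= t).

(* admissible: (A-1) t(L) < |E(L)|, (A-2) for each vertex v and edge e
   incident with v, a spanning trail of length t(L) begins v, e, ... *)
Definition admissible : Prop :=
  exists t : nat, longest_trail_length t /\ t < #|E| /\
    (forall (v : V) (e : E), incident e v ->
       exists s : seq (E * V),
         [/\ is_trail v s, size s = t, ohead (map fst s) = Some e & spans v s]).

End Multigraph.

From mathcomp Require Import all_boot zify.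
Set Implicit Arguments. Unset Strict Implicit. Unset Printing Implicit Defensive.

(* Take a longest trail T starting at v. Every edge at v lies on T, since
   otherwise it could be prepended; so deg v counts the ends of the edges of T
   at v, which is odd as soon as T is not closed. T cannot be closed: a closed
   spanning trail can be rotated to start at an end of any edge it misses
   (one exists by (A-1)), and then extended by that edge. Finally, if e were
   the only edge at v, the longest trail starting u, e, v at the other end u
   of e would be stuck at v, so t(L) = 1; the trail v, e, w would then span L,
   and any second edge would be incident with w and extend it. *)

Lemma exists_notin (T : finType) (s : seq T) : size s < #|T| -> exists x, x \notin s.
Proof.
move=> lt_s_T; case: (pickP [predC s]) => [x s'x | all_in]; first by exists x.
suff: #|T| <= size s by rewrite leqNgt lt_s_T.
apply: leq_trans (card_size s); apply: subset_leq_card; apply/subsetP => x _.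
by have /negbFE := all_in x.
Qed.

Section Trails.
Variables (V E : finType) (ends : E -> V * V).

Definition end_count (e : E) (v : V) : nat :=
  ((ends e).1 == v) + ((ends e).2 == v).

Lemma deg_end_count v : deg ends v = \sum_e end_count e v.
Proof.
rewrite /deg /end_count big_split /= -!sum1_card.
by congr (_ + _); rewrite big_mkcond; apply: eq_bigr => e _; rewrite inE; case: (_ == _).
Qed.

Lemma end_count_gt0 e v : incident ends e v -> 0 < end_count e v.
Proof. by rewrite /end_count; case/orP => ->; rewrite ?addn1. Qed.

Lemma incident_deg_gt1 e g v :
  g != e -> incident ends e v -> incident ends g v -> 1 < deg ends v.
Proof.
move=> neq_ge /end_count_gt0 ce /end_count_gt0 cg.
rewrite deg_end_count (bigD1 e) // (bigD1 g) //= addnA.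
by apply: leq_trans (leq_addr _ _); lia.
Qed.

Lemma joinsC e u w : joins ends e u w = joins ends e w u.
Proof. by rewrite /joins orbC. Qed.

Lemma joins_incident e u w : joins ends e u w -> incident ends e u.
Proof. by rewrite /joins /incident; case/orP => /eqP -> /=; rewrite eqxx ?orbT. Qed.

Lemma joins_incident_r e u w : joins ends e u w -> incident ends e w.
Proof. by rewrite joinsC; apply: joins_incident. Qed.

Lemma incident_joins e v : incident ends e v -> exists w, joins ends e v w.
Proof.
rewrite /incident /joins; case: (ends e) => a b /=.
by case/orP => /eqP ->; [exists b | exists a]; rewrite eqxx ?orbT.
Qed.

Lemma incident_fst e : incident ends e (ends e).1.
Proof. by rewrite /incident eqxx. Qed.

Lemma joins_other_end e u w y : joins ends e u w -> joins ends e u y -> y = w.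
Proof.
rewrite /joins; case: (ends e) => a b; rewrite !xpair_eqE.
by do 2 case/orP=> /andP [/eqP ? /eqP ?]; subst.
Qed.

Lemma end_count_joins e u w v :
  joins ends e u w -> end_count e v = (u == v) + (w == v).
Proof. by rewrite /end_count; case/orP => /eqP -> //=; rewrite addnC. Qed.

Lemma walk_ok_cat u s1 s2 :
  walk_ok ends u (s1 ++ s2) =
  walk_ok ends u s1 && walk_ok ends (last u (map snd s1)) s2.
Proof. by elim: s1 u => [|[e w] s1 IH] u //=; rewrite IH andbA. Qed.

Lemma walk_ok_rcons u s e w :
  walk_ok ends u (rcons s (e, w)) =
  walk_ok ends u s && joins ends e (last u (map snd s)) w.
Proof. by rewrite -cats1 walk_ok_cat /= andbT. Qed.

Lemma walk_incident u s v :
  walk_ok ends u s -> v \in map snd s ->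
  exists2 e, e \in map fst s & incident ends e v.
Proof.
elim: s u => [|[e w] s IH] u //= /andP [J W].
rewrite inE => /orP [/eqP -> | /(IH w W) [f f_s If]].
  by exists e; rewrite ?inE ?eqxx // (joins_incident_r J).
by exists f; rewrite // inE f_s orbT.
Qed.

Lemma odd_walk_end_count u s v :
  walk_ok ends u s ->
  odd (\sum_(x <- s) end_count x.1 v) = (u == v) (+) (last u (map snd s) == v).
Proof.
elim: s u => [|[e w] s IH] u /=; first by rewrite big_nil addbb.
case/andP => J W; rewrite big_cons /= oddD (end_count_joins v J) oddD !oddb (IH w W).
by case: (u == v); case: (w == v); case: (_ == v).
Qed.

Lemma deg_trail_sum (s : seq (E * V)) v :
  uniq (map fst s) -> (forall e, incident ends e v -> e \in map fst s) ->
  deg ends v = \sum_(x <- s) end_count x.1 v.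
Proof.
move=> uniq_s all_in; rewrite deg_end_count -(big_map fst xpredT (end_count^~ v)).
rewrite (big_uniq _ uniq_s) [RHS]big_mkcond; apply: eq_bigr => e _.
case: ifP => // /negbT e_notin; apply/eqP; rewrite addn_eq0 !eqb0 -negb_or.
by apply: contra e_notin; apply: all_in.
Qed.

Lemma trail_vertices_split u (s : seq (E * V)) a :
  a \in trail_vertices u s ->
  exists s1 s2, s = s1 ++ s2 /\ last u (map snd s1) = a.
Proof.
elim: s u => [|[e w] s IH] u; rewrite /trail_vertices /= inE.
  by move/eqP ->; exists [::], [::].
case/orP => [/eqP -> | /IH [s1 [s2 [-> <-]]]]; first by exists [::], ((e, w) :: s).
by exists ((e, w) :: s1), s2.
Qed.

Lemma closed_trail_rot u s1 s2 (a := last u (map snd s1)) :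
  is_trail ends u (s1 ++ s2) -> last u (map snd (s1 ++ s2)) = u ->
  is_trail ends a (s2 ++ s1) /\ last a (map snd (s2 ++ s1)) = a.
Proof.
rewrite /is_trail !walk_ok_cat !map_cat !last_cat => /andP [/andP [W1 W2] U] closed.
by rewrite W2 closed W1 uniq_catC U.
Qed.

Section LongestTrail.
Variable t : nat.
Hypothesis longest : longest_trail_length ends t.

Lemma longest_trail_start_incident v s g :
  is_trail ends v s -> size s = t -> incident ends g v -> g \in map fst s.
Proof.
case: longest => _ le_t /andP [W U] size_s /incident_joins [w J].
apply/negPn/negP => g_notin.
have /le_t : is_trail ends w ((g, v) :: s) by rewrite /is_trail /= joinsC J W g_notin U.
by rewrite /= size_s ltnn.
Qed.

Lemma longest_trail_last_incident v s g :
  is_trail ends v s -> size s = t ->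
  incident ends g (last v (map snd s)) -> g \in map fst s.
Proof.
case: longest => _ le_t /andP [W U] size_s /incident_joins [w J].
apply/negPn/negP => g_notin.
have /le_t : is_trail ends v (rcons s (g, w)).
  by rewrite /is_trail walk_ok_rcons W J map_rcons rcons_uniq g_notin U.
by rewrite size_rcons size_s ltnn.
Qed.

Lemma longest_spanning_trail_not_closed v s :
  t < #|E| -> is_trail ends v s -> size s = t -> spans v s ->
  last v (map snd s) != v.
Proof.
move=> lt_t_E T size_s span_s; apply/eqP => closed.
have [f f_notin] : exists f, f \notin map fst s by apply: exists_notin; rewrite size_map size_s.
have [s1 [s2 [def_s last_s1]]] := trail_vertices_split (span_s (ends f).1).
rewrite def_s in T closed size_s f_notin.
have [] := closed_trail_rot T closed; rewrite last_s1 => T' closed'.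
have size' : size (s2 ++ s1) = t by rewrite size_cat addnC -size_cat.
have := longest_trail_last_incident T' size'; rewrite closed' => /(_ _ (incident_fst f)).
by rewrite !map_cat !mem_cat orbC -mem_cat -map_cat (negbTE f_notin).
Qed.

End LongestTrail.

Section Admissible.
Variable t : nat.
Hypotheses (longest : longest_trail_length ends t) (lt_t_E : t < #|E|).
Hypothesis spanning_trail : forall (v : V) (e : E), incident ends e v ->
  exists s : seq (E * V),
    [/\ is_trail ends v s, size s = t, ohead (map fst s) = Some e & spans v s].

Lemma admissible_incident v : exists e, incident ends e v.
Proof.
have [e0 _] : exists e0 : E, e0 \in E by apply/card_gt0P; apply: leq_ltn_trans lt_t_E.
have [s [/andP [W _] _ _ span_s]] := spanning_trail (incident_fst e0).
case/predU1P: (span_s v) => [-> | v_s]; first by exists e0; apply: incident_fst.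
by have [e _ Ie] := walk_incident W v_s; exists e.
Qed.

Lemma admissible_odd_deg v : odd (deg ends v).
Proof.
have [e /spanning_trail [s [T size_s _ span_s]]] := admissible_incident v.
have not_closed := longest_spanning_trail_not_closed longest lt_t_E T size_s span_s.
rewrite (deg_trail_sum (andP T).2 (fun g => longest_trail_start_incident longest T size_s)).
by rewrite (odd_walk_end_count v (andP T).1) eqxx (negbTE not_closed).
Qed.

Lemma unique_incident_trail_length v e :
  incident ends e v -> (forall g, incident ends g v -> g = e) -> t = 1.
Proof.
move=> Ie unique; have [u Jvu] := incident_joins Ie.
have Juv : joins ends e u v by rewrite joinsC.
have [[|[e' y] s] [/andP [W U] <- //= [def_e'] _]] := spanning_trail (joins_incident Juv).
subst e'; case/andP: W => /(joins_other_end Juv) -> W.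
case: s U W => [|[g z] s] //= U /andP [/joins_incident /unique def_g _].
by rewrite def_g inE eqxx in U.
Qed.

Lemma admissible_incident_not_unique v e :
  incident ends e v -> exists2 g, g != e & incident ends g v.
Proof.
move=> Ie; case: (pickP [pred g | (g != e) && incident ends g v]) => [g /andP [] | none].
  by exists g.
have unique g : incident ends g v -> g = e.
  by move=> Ig; apply/eqP; have := none g; rewrite /= Ig andbT => /negbFE.
have t1 := unique_incident_trail_length Ie unique.
have [s [T size_s head_s span_s]] := spanning_trail Ie.
rewrite t1 in size_s.
case: s T size_s head_s span_s => [|[e' w] []] // T _ [def_e'] span_s; subst e'.
have [f f_notin] : exists f, f \notin [:: e] by apply: exists_notin; rewrite /= -t1.
have := span_s (ends f).1; rewrite /trail_vertices /= !inE.
case/orP => /eqP end_f; case/negP: f_notin.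
  by rewrite (unique f) ?mem_head // -end_f incident_fst.
apply: (longest_trail_last_incident longest T); first by rewrite t1.
by rewrite /= -end_f incident_fst.
Qed.

Lemma admissible_deg_gt1 v : 1 < deg ends v.
Proof.
have [e Ie] := admissible_incident v.
have [g neq_ge Ig] := admissible_incident_not_unique Ie.
exact: incident_deg_gt1 neq_ge Ie Ig.
Qed.

End Admissible.
End Trails.

Theorem lemma2p6 (V E : finType) (ends : E -> V * V) :
  admissible ends -> forall v : V, odd (deg ends v) /\ 1 < deg ends v.
Proof.
move=> [t [longest [lt_t_E spanning_trail]]] v; split.
  exact: admissible_odd_deg longest lt_t_E spanning_trail v.
exact: admissible_deg_gt1 longest lt_t_E spanning_trail v.
Qed.
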